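(* In the BBoxER framework described in the context, let the seed $\omega$ of the algorithm $a$ be a random variable independent of the dataset draw $\omega_D$, let $b\in\mathbb N$ be a budget and $\epsilon>0$, and assume there is $\delta_{1,\epsilon}$ with $P_{\omega_D}(|\widehat L(x)-L(x)|>\epsilon)\le\delta_{1,\epsilon}$ for every parameter $x$. Then $$P_{\omega,\omega_D}\big(|\widehat L(\widehat x)-L(\widehat x)|>\epsilon\big)\le \Big(\sup_{\omega\ \text{constant}} N(\omega,a,b)\Big)\cdot\delta_{1,\epsilon},$$ where $\widehat x$ depends on both $\omega$ and $\omega_D$ and the supremum is over all fixed values of the seed.
   Context: BBoxER framework. Fix an initial model $m_0$ and a map $(m_0,x)\mapsto \mathrm{modified}(m_0,x)$ sending a parameter $x$ to a model. Let $\mathcal D$ be the class of datasets $D$ of size $s$ drawn from a distribution $F$; $\omega_D$ denotes the randomness of the draw of $D$. A black-box optimization algorithm $a$, deterministic given its seed $\omega$, is run with budget $b$ on $D$: it is initialized from $\omega$; at each iteration $i=1,\dots,b$ it proposes $x_i$ and model $m_i=\mathrm{modified}(m_0,x_i)$, declares a finite number $k_i\ge1$ of possible comparison outcomes, then receives $\mathrm{choice}_i\in\{1,\dots,k_i\}$ computed by comparing $m_1,\dots,m_i$ on $D$; finally it recommends $\widehat x$. The algorithm accesses $D$ only through the $\mathrm{choice}_i$, so $\widehat x$ is a deterministic function of $(\omega,a,b,\mathrm{choice}_1,\dots,\mathrm{choice}_b)$. The internal state is $S(\omega,D,a,b)=(\omega,\mathrm{choice}_1,\dots,\mathrm{choice}_b)$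 and $N(\omega,a,b)=\operatorname{Card}\{S(\omega,D,a,b):D\in\mathcal D\}$. $L(x)$ is the generalization error under $F$ of $\mathrm{modified}(m_0,x)$, $\widehat L(x)$ its empirical error on $D$. *)

From HB Require Import structures.
From mathcomp Require Import all_boot all_order all_algebra.
From mathcomp Require Import all_classical all_reals all_analysis.
Set Implicit Arguments. Unset Strict Implicit. Unset Printing Implicit Defensive.
Import Order.TTheory GRing.Theory Num.Theory.
Local Open Scope classical_set_scope.
Local Open Scope ring_scope.

(* Comparison outcomes are natural numbers;
   the list of previously received outcomes determines everything the
   algorithm knows about the data. *)
Record bbox_algo (Seed Param : Type) := BBoxAlgo {
  propose   : Seed -> seq nat -> Param; (* x_i, from seed and choice_1..choice_{i-1} *)
  noutcomes : Seed -> seq nat -> nat;   (* k_i, declared number of outcomes *)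
  recommend : Seed -> seq nat -> Param  (* \hat x, from seed and choice_1..choice_b *)
}.

Definition algo_wf (Seed Param : Type) (a : bbox_algo Seed Param) :=
  forall w cs, (1 <= noutcomes a w cs)%N.

Definition compare_wf (Model Data : Type) (compare : seq Model -> nat -> Data -> nat) :=
  forall ms k D, (1 <= k)%N -> (1 <= compare ms k D <= k)%N.

Section Run.
Variables (Seed Param Model Data : Type).
Variables (m0 : Model) (modified : Model -> Param -> Model).
Variable (compare : seq Model -> nat -> Data -> nat).
Variable (a : bbox_algo Seed Param).

(* run b w D = ([m_1;..;m_b], [choice_1;..;choice_b]) *)
Fixpoint run (b : nat) (w : Seed) (D : Data) : seq Model * seq nat :=
  match b with
  | 0 => ([::], [::])
  | b'.+1 =>
      let: (ms, cs) := run b' w D in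
      let x := propose a w cs in
      let ms' := rcons ms (modified m0 x) in
      (ms', rcons cs (compare ms' (noutcomes a w cs) D))
  end.

Definition choices (b : nat) (w : Seed) (D : Data) : seq nat := (run b w D).2.

Definition xhat (b : nat) (w : Seed) (D : Data) : Param :=
  recommend a w (choices b w D).

Definition state (b : nat) (w : Seed) (D : Data) : Seed * seq nat :=
  (w, choices b w D).

End Run.

(* N(w, a, b) = Card { S(w, D, a, b) : D in DD }, as an extended real
   (+oo if infinite). *)
Definition Nstates (R : realType) (Seed : choiceType) (Param Model Data : Type)
  (m0 : Model) (modified : Model -> Param -> Model)
  (compare : seq Model -> nat -> Data -> nat) (a : bbox_algo Seed Param)
  (DD : set Data) (b : nat) (w : Seed) : \bar R :=
  counting [set state m0 modified compare a b w D | D in DD].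

From HB Require Import structures.
From mathcomp Require Import all_boot all_order all_algebra.
From mathcomp Require Import all_classical all_reals all_analysis.
From mathcomp Require Import finmap.
Import Order.TTheory GRing.Theory Num.Theory.
Set Implicit Arguments. Unset Strict Implicit. Unset Printing Implicit Defensive.
Local Open Scope classical_set_scope.
Local Open Scope ring_scope.

(* For a fixed seed w, the recommendation is a function of the choice sequence
   alone, so the event "large generalization gap at xhat" is covered by the
   gap events of the at most N(w) parameters recommend a w cs, cs ranging over
   the reachable choice sequences.  Boole's inequality bounds its PD-measure
   by N(w) * delta1, and integrating this section bound against the seed law
   bounds the product measure by sup_w N(w) * delta1. *)

Lemma counting_image (R : realType) (T U : choiceType) (f : T -> U) (A : set T) :
  injective f -> counting (f @` A) = counting A :> \bar R.
Proof.
move=> f_inj; have finE : finite_set (f @` A) = finite_set A.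
  apply/propext; split; last exact: finite_image.
  move=> /(finite_preimage (in2W f_inj)); apply: sub_finite_set.
  by move=> x Ax; exists x.
rewrite /counting finE; case: ifPn => // /asboolP finA.
by rewrite fset_set_image // card_imfset.
Qed.

Section measure_cover.
Local Open Scope ereal_scope.
Context d (T : measurableType d) (R : realType) (mu : {measure set T -> \bar R}).

Lemma measure_countable_cover_null (I : countType) (F : I -> set T) (A : set T) :
  (forall i, measurable (F i)) -> (forall i, mu (F i) = 0) ->
  measurable A -> A `<=` \bigcup_i F i -> mu A = 0.
Proof.
move=> mF muF0 mA AF; pose G n := oapp F set0 (pickle_inv n).
apply/eqP; rewrite -measure_le0.
apply: (le_trans (measure_sigma_subadditive mu (F := G) _ mA _)).
- by move=> n; rewrite /G; case: (pickle_inv n) => [i|] /=.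
- move=> x /AF [i _ Fix]; exists (choice.pickle i) => //.
  by rewrite /G pickleK_inv.
by rewrite eseries0 // => n _ _; rewrite /G; case: (pickle_inv n) => [i|] /=;
  rewrite ?muF0 ?measure0.
Qed.

(* Countability of the index type is only needed when [D] is infinite and
   [delta = 0]. *)
Lemma measure_cover_le_counting (I : countType) (D : set I) (F : I -> set T)
    (A : set T) (delta : R) :
  (0 <= delta)%R -> (forall i, measurable (F i)) ->
  (forall i, mu (F i) <= delta%:E) ->
  measurable A -> A `<=` \bigcup_(i in D) F i -> mu A <= counting D * delta%:E.
Proof.
move=> delta_ge0 mF muF mA AF; rewrite /counting; case: ifPn => [/asboolP finD|_].
  apply: (le_trans (content_sub_fsum _ finD (fun i _ => mF i) mA AF)).
  apply: (le_trans (lee_fsum finD (fun i _ => muF i))).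
  by rewrite fsbig_finite //= big_const_seq count_predT iter_addr_0 mule_natl.
have [delta0|delta_gt0] := eqVneq delta 0%R; last first.
  by rewrite gt0_mulye ?leey // lte_fin lt_neqAle eq_sym delta_gt0.
rewrite delta0 mule0 (measure_countable_cover_null mF _ mA) //.
  by move=> i; apply/eqP; rewrite -measure_le0; have := muF i; rewrite delta0.
by move=> x /AF [i _ Fix]; exists i.
Qed.

End measure_cover.

Lemma product_measure1_le_xsection d1 d2 (T1 : measurableType d1)
    (T2 : measurableType d2) (R : realType) (P : probability T1 R)
    (nu : {sigma_finite_measure set T2 -> \bar R}) (E : set (T1 * T2)) (c : \bar R) :
  measurable E -> (forall x, (nu (xsection E x) <= c)%E) -> ((P \x nu) E <= c)%E.
Proof.
move=> mE nuE; have c_ge0 : (0 <= c)%E := le_trans (measure_ge0 _ _) (nuE point).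
rewrite /product_measure1.
apply: (@le_trans _ _ (\int[P]_(x in setT) (cst c) x)%E).
  apply: ge0_le_integral => //; first exact: (measurable_fun_xsection nu mE).
  by move=> x _; exact: nuE.
rewrite integral_cst //.
have -> : (P : measure _ _) [set: T1] = 1%E by exact: probability_setT.
by rewrite mule1.
Qed.

Section bboxer.
Context (R : realType) (d1 d2 : measure_display).
Context (Tw : measurableType d1) (TD : measurableType d2).
Variables (Param Model Data : Type) (m0 : Model) (modified : Model -> Param -> Model).
Variables (DD : set Data) (draw : TD -> Data) (compare : seq Model -> nat -> Data -> nat).
Variables (a : bbox_algo Tw Param) (L : Param -> R) (Lhat : Param -> Data -> R).
Variables (b : nat) (eps : R).

Definition gap_event (x : Param) : set TD :=
  [set wD | (eps < `|Lhat x (draw wD) - L x|)%R].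

Definition xhat_gap_event : set (Tw * TD) :=
  [set p | gap_event (xhat m0 modified compare a b p.1 (draw p.2)) p.2].

Let choice_set (w : Tw) : set (seq nat) :=
  [set choices m0 modified compare a b w D | D in DD].

Lemma Nstates_choices w :
  Nstates R m0 modified compare a DD b w = counting (choice_set w).
Proof.
rewrite /Nstates -(@counting_image R _ _ (pair w) (choice_set w)).
  by rewrite image_comp.
by move=> cs cs' [].
Qed.

Hypothesis draw_in : forall wD, DD (draw wD).

Lemma xsection_xhat_gap_event_sub w : xsection xhat_gap_event w `<=`
  \bigcup_(cs in choice_set w) gap_event (recommend a w cs).
Proof.
move=> wD; rewrite /xsection /= in_setE => gap.
by exists (choices m0 modified compare a b w (draw wD)) => //; exists (draw wD).
Qed.

Variables (PD : probability TD R) (delta : R).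
Hypothesis gap_event_measurable : forall x, measurable (gap_event x).
Hypothesis gap_event_le : forall x, (PD (gap_event x) <= delta%:E)%E.

Lemma delta_ge0 (x : Param) : 0 <= delta.
Proof.
by have /(le_trans (measure_ge0 _ _)) := gap_event_le x; rewrite lee_fin.
Qed.

Lemma xsection_xhat_gap_event_le w : measurable xhat_gap_event ->
  (PD (xsection xhat_gap_event w)
    <= Nstates R m0 modified compare a DD b w * delta%:E)%E.
Proof.
move=> mE; rewrite Nstates_choices.
apply: (measure_cover_le_counting (delta_ge0 (recommend a w [::])) _ _
  (measurable_xsection w mE) (@xsection_xhat_gap_event_sub w)) => cs.
- exact: gap_event_measurable.
- exact: gap_event_le.
Qed.

End bboxer.

Theorem theorem3
  (R : realType)
  (* seed randomness omega and dataset randomness omega_D *)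
  (d1 d2 : measure_display) (Tw : measurableType d1) (TD : measurableType d2)
  (Pw : probability Tw R) (PD : probability TD R)
  (* models, parameters, datasets *)
  (Param Model Data : Type) (m0 : Model) (modified : Model -> Param -> Model)
  (DD : set Data) (draw : TD -> Data) (draw_in : forall wD, DD (draw wD))
  (* comparison procedure and algorithm *)
  (compare : seq Model -> nat -> Data -> nat) (compare_ok : compare_wf compare)
  (a : bbox_algo Tw Param) (a_ok : algo_wf a)
  (* generalization error L and empirical error \hat L on a dataset *)
  (L : Param -> R) (Lhat : Param -> Data -> R)
  (b : nat) (eps delta1 : R) (eps_gt0 : 0 < eps)
  (bad_meas : forall x : Param,
      measurable [set wD : TD | (eps < `|Lhat x (draw wD) - L x|)%R])
  (hyp : forall x : Param,
      (PD [set wD : TD | (eps < `|Lhat x (draw wD) - L x|)%R] <= delta1%:E)%E)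
  (joint_meas : measurable [set p : Tw * TD |
      (eps < `|Lhat (xhat m0 modified compare a b p.1 (draw p.2)) (draw p.2)
              - L (xhat m0 modified compare a b p.1 (draw p.2))|)%R]) :
  ((Pw \x PD)%E [set p : Tw * TD |
      (eps < `|Lhat (xhat m0 modified compare a b p.1 (draw p.2)) (draw p.2)
              - L (xhat m0 modified compare a b p.1 (draw p.2))|)%R]
   <= ereal_sup (range (Nstates R m0 modified compare a DD b)) * delta1%:E)%E.
Proof.
apply: product_measure1_le_xsection => // w.
apply: (le_trans (xsection_xhat_gap_event_le draw_in bad_meas hyp w joint_meas)).
apply: lee_wpmul2r; first by rewrite lee_fin (delta_ge0 hyp (recommend a w [::])).
by apply: ereal_sup_ubound; exists w.
Qed.
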